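(* Let $\xi\in\mathbb{Z}[\lambda]$ and let $m$ be a positive integer. Define the order of $\xi$ modulo $m$ by $$t(\xi)=\min\{k\ge 1:\ \omega^k\xi\equiv \xi \pmod{m\mathbb{Z}[\lambda]}\}.$$ Define $T(m)$ for positive integers $m$ by $T(1)=1$ and the following rules. (i) If $\gcd(n,m)=1$ then $T(nm)=\operatorname{lcm}(T(n),T(m))$. (ii) If $m=p^e$ with $p$ prime and $e\ge1$: - $p$ ramified: $T(2^e)=2^{e+1}(2-1)=2^{e+1}$, and $T(11^e)=11^e\cdot 10$; - $p$ inert: $T(p^e)=p^{e-1}(p^2+p+1)$ if $p\equiv 0$ or $2 \pmod 3$, and $T(p^e)=p^{e-1}(p^2+p+1)/3$ if $p\equiv1\pmod 3$; - $p$ splits: $T(p^e)=p^{e-1}(p^2-1)/3$; - $p$ splits completely: $T(p^e)=p^{e-1}(p-1)$ if $p\equiv 2\pmod 3$, and $T(p^e)=p^{e-1}(p-1)/3$ if $p\equiv 1\pmod 3$. Then $t(\xi)$ divides $T(m)$.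
   Context: Let $\lambda$ be the unique real root of $f(x)=x^3+x^2+x-1$, and $\omega=\lambda^3$ (so $\omega=1-\lambda-\lambda^2$, a unit of $\mathbb{Z}[\lambda]$ of norm $1$). $\mathbb{Z}[\lambda]=\{a_0+a_1\lambda+a_2\lambda^2: a_i\in\mathbb{Z}\}$ is the full ring of integers of $\mathbb{Q}(\lambda)$; the discriminant of $f$ is $-44$. Classification of primes $p$: $p$ is ramified if $p\in\{2,11\}$ (for these, $f$ has a repeated root mod $p$: $f\equiv (x+1)^3 \bmod 2$ and $f\equiv (x+3)^2(x+6)\bmod 11$). For any other prime $p$, $f \bmod p$ is squarefree and $p$ is called inert, splits, or splits completely according as $f\bmod p$ factors into $1$, $2$, or $3$ irreducible factors over $\mathbb{F}_p$. *)

From HB Require Import structures.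
From mathcomp Require Import all_boot all_order all_algebra.
Set Implicit Arguments. Unset Strict Implicit. Unset Printing Implicit Defensive.
Import Order.TTheory GRing.Theory Num.Theory.

Local Open Scope ring_scope.

(* Elements of Z[lambda] = Z[x]/(x^3+x^2+x-1), written a0 + a1*lambda + a2*lambda^2,
   represented by their coordinate triple (a0, a1, a2) in the Z-basis 1, lambda, lambda^2. *)
Definition Zl := (int * int * int)%type.

Definition Zl_c0 (x : Zl) : int := x.1.1.
Definition Zl_c1 (x : Zl) : int := x.1.2.
Definition Zl_c2 (x : Zl) : int := x.2.

(* Multiplication, using lambda^3 = 1 - lambda - lambda^2 and lambda^4 = -1 + 2 lambda. *)
Definition Zl_mul (x y : Zl) : Zl :=
  let a0 := Zl_c0 x in let a1 := Zl_c1 x in let a2 := Zl_c2 x in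
  let b0 := Zl_c0 y in let b1 := Zl_c1 y in let b2 := Zl_c2 y in
  let c0 := a0 * b0 in
  let c1 := a0 * b1 + a1 * b0 in
  let c2 := a0 * b2 + a1 * b1 + a2 * b0 in
  let c3 := a1 * b2 + a2 * b1 in
  let c4 := a2 * b2 in
  (c0 + c3 - c4, c1 - c3 + 2 * c4, c2 - c3).

Definition Zl_one : Zl := (1, 0, 0).

(* omega = lambda^3 = 1 - lambda - lambda^2 *)
Definition omega : Zl := (1, -1, -1).

Definition Zl_pow (x : Zl) (k : nat) : Zl := iter k (Zl_mul x) Zl_one.

Definition Zl_cong (m : nat) (x y : Zl) : Prop :=
  [/\ (m%:Z %| Zl_c0 x - Zl_c0 y)%Z, (m%:Z %| Zl_c1 x - Zl_c1 y)%Z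
    & (m%:Z %| Zl_c2 x - Zl_c2 y)%Z].

Definition is_order_mod (m : nat) (xi : Zl) (t : nat) : Prop :=
  [/\ (0 < t)%N, Zl_cong m (Zl_mul (Zl_pow omega t) xi) xi
    & forall k : nat, (0 < k)%N -> Zl_cong m (Zl_mul (Zl_pow omega k) xi) xi -> (t <= k)%N].

Definition f_mod (p : nat) : {poly 'F_p} := 'X^3 + 'X^2 + 'X - 1.

Definition nfactors_mod (p k : nat) : Prop :=
  exists s : seq {poly 'F_p},
    [/\ size s = k, all (fun q => q \is monic) s,
        (forall q, q \in s -> irreducible_poly q) & \prod_(q <- s) q = f_mod p].

Definition inert (p : nat) : Prop :=
  [/\ prime p, p <> 2%N, p <> 11%N & nfactors_mod p 1].
Definition splits (p : nat) : Prop :=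
  [/\ prime p, p <> 2%N, p <> 11%N & nfactors_mod p 2].
Definition splits_completely (p : nat) : Prop :=
  [/\ prime p, p <> 2%N, p <> 11%N & nfactors_mod p 3].

Definition T_rules (T : nat -> nat) : Prop :=
  T 1%N = 1%N /\
      (forall n m : nat, (0 < n)%N -> (0 < m)%N -> coprime n m ->
          T (n * m)%N = lcmn (T n) (T m)) /\
      (forall e : nat, (0 < e)%N -> T (2 ^ e)%N = (2 ^ e.+1)%N) /\
      (forall e : nat, (0 < e)%N -> T (11 ^ e)%N = (11 ^ e * 10)%N) /\
      (forall p e : nat, (0 < e)%N -> inert p ->
          T (p ^ e)%N = (if p %% 3 == 1 then p ^ e.-1 * (p ^ 2 + p + 1) %/ 3
                         else p ^ e.-1 * (p ^ 2 + p + 1))%N) /\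
      (forall p e : nat, (0 < e)%N -> splits p ->
          T (p ^ e)%N = (p ^ e.-1 * (p ^ 2 - 1) %/ 3)%N) /\
      (forall p e : nat, (0 < e)%N -> splits_completely p ->
          T (p ^ e)%N = (if p %% 3 == 1 then p ^ e.-1 * (p - 1) %/ 3
                         else p ^ e.-1 * (p - 1))%N).

(* Identify [Z[lambda]] with [Z[X]/(f)], [f = X^3 + X^2 + X - 1], through the
   coordinate polynomial [Zl_poly]: then [omega = X^3], and [omega^k xi = xi]
   modulo [m] exactly when [(X^(3k) - 1) xi] lies in the ideal [(m, f)] of
   [Z[X]].  So it suffices to show [X^(3 T(m)) = 1] modulo [(m, f)], and by the
   Chinese remainder theorem only for prime powers.  Modulo a prime [p] other
   than 2 and 11, [f] is separable and Frobenius permutes its roots: if [p] is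
   inert they form a single orbit [x, x^p, x^(p^2)] whose product [1] gives
   [x^(p^2+p+1) = 1]; otherwise the roots lie in [F_(p^2)] or [F_p], giving
   [X^(p^2-1) = 1] resp. [X^(p-1) = 1].  For [p = 2] and [p = 11] one checks
   [X^4 = 1] and [X^110 = 1] directly.  A congruence [X^k = 1] modulo [(p, f)]
   lifts to [X^(k p^e) = 1] modulo [(p^(e+1), f)], and [3 T(p^(e+1))] is a
   multiple of [k p^e]: the division by 3 in [T] occurs only when [3] divides
   [k]. *)

From HB Require Import structures.
From mathcomp Require Import all_boot all_order all_algebra all_field.
From mathcomp Require Import ring zify.
Set Implicit Arguments. Unset Strict Implicit. Unset Printing Implicit Defensive.
Import Order.TTheory GRing.Theory Num.Theory.
Local Open Scope ring_scope.

Local Notation cubic R := ('X^3 + 'X^2 + 'X - 1 : {poly R}).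

Section IdealTwoGenerated.
Variables (R : comNzRingType) (c : R).

Definition in_ideal2 (a P : R) : Prop := exists u v, P = a * u + c * v.

Lemma in_ideal2_0 a : in_ideal2 a 0.
Proof. by exists 0, 0; rewrite !mulr0 addr0. Qed.

Lemma in_ideal2_1 P : in_ideal2 1 P.
Proof. by exists P, 0; rewrite mulr0 addr0 mul1r. Qed.

Lemma in_ideal2l a Q : in_ideal2 a (a * Q).
Proof. by exists Q, 0; rewrite mulr0 addr0. Qed.

Lemma in_ideal2_self a : in_ideal2 a a.
Proof. by rewrite -[X in in_ideal2 _ X]mulr1; apply: in_ideal2l. Qed.

Lemma in_ideal2r a Q : in_ideal2 a (c * Q).
Proof. by exists 0, Q; rewrite mulr0 add0r. Qed.

Lemma in_ideal2D a P Q : in_ideal2 a P -> in_ideal2 a Q -> in_ideal2 a (P + Q).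
Proof. by move=> [u [v ->]] [u' [v' ->]]; exists (u + u'), (v + v'); ring. Qed.

Lemma in_ideal2N a P : in_ideal2 a P -> in_ideal2 a (- P).
Proof. by move=> [u [v ->]]; exists (- u), (- v); ring. Qed.

Lemma in_ideal2B a P Q : in_ideal2 a P -> in_ideal2 a Q -> in_ideal2 a (P - Q).
Proof. by move=> hP /in_ideal2N; apply: in_ideal2D. Qed.

Lemma in_ideal2_subr a P Q : in_ideal2 a (P - Q) -> in_ideal2 a P <-> in_ideal2 a Q.
Proof.
move=> hPQ; split=> h; first by rewrite -[Q](subKr P); apply: in_ideal2B.
by rewrite -[P](subrK Q); apply: in_ideal2D.
Qed.

Lemma in_ideal2Ml a P Q : in_ideal2 a P -> in_ideal2 a (Q * P).
Proof. by move=> [u [v ->]]; exists (Q * u), (Q * v); ring. Qed.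

Lemma in_ideal2Mr a P Q : in_ideal2 a P -> in_ideal2 a (P * Q).
Proof. by rewrite mulrC; apply: in_ideal2Ml. Qed.

Lemma in_ideal2_sum a (I : finType) (G : I -> R) :
  (forall i, in_ideal2 a (G i)) -> in_ideal2 a (\sum_i G i).
Proof. by move=> hG; elim/big_ind: _ => //; [apply: in_ideal2_0 | apply: in_ideal2D]. Qed.

Lemma in_ideal2_trans a b P : in_ideal2 b a -> in_ideal2 a P -> in_ideal2 b P.
Proof.
by move=> [u [v ->]] [u' [v' ->]]; exists (u * u'), (v * u' + v'); ring.
Qed.

Lemma in_ideal2M a b P Q :
  in_ideal2 a P -> in_ideal2 b Q -> in_ideal2 (a * b) (P * Q).
Proof.
move=> [u [v ->]] [u' [v' ->]].
by exists (u * u'), (a * u * v' + v * (b * u' + c * v')); ring.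
Qed.

Lemma in_ideal2_crt a b u v P : u * a + v * b = 1 ->
  in_ideal2 a P -> in_ideal2 b P -> in_ideal2 (a * b) P.
Proof.
move=> uv [x [y Ea]] [x' [y' Eb]].
exists (u * x' + v * x), (u * a * y' + v * b * y).
by rewrite -[P]mul1r -{1}uv mulrDl {1}Eb Ea; ring.
Qed.

Lemma in_ideal2_subrX1 a x n : in_ideal2 a (x - 1) -> in_ideal2 a (x ^+ n - 1).
Proof.
move=> hx; elim: n => [|n IH]; first by rewrite expr0 subrr; apply: in_ideal2_0.
have -> : x ^+ n.+1 - 1 = x ^+ n * (x - 1) + (x ^+ n - 1) by rewrite exprS; ring.
by apply: in_ideal2D => //; apply: in_ideal2Ml.
Qed.

(* [x ^+ q - 1 = (x - 1) * (\sum_(i < q) (x ^+ i - 1) + q)], and the second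
   factor lies in [(q, c)] as soon as [(a, c)] does. *)
Lemma in_ideal2_subrX1_lift a (q : nat) x : in_ideal2 q%:R a ->
  in_ideal2 a (x - 1) -> in_ideal2 (a * q%:R) (x ^+ q - 1).
Proof.
move=> hqa hx.
have -> : x ^+ q - 1 = (x - 1) * (\sum_(i < q) (x ^+ i - 1) + q%:R).
  by rewrite subrX1 sumrB sumr_const card_ord subrK.
apply: in_ideal2M => //; apply: in_ideal2D; last exact: in_ideal2_self.
by apply: in_ideal2_sum => i; apply: in_ideal2_trans hqa _; apply: in_ideal2_subrX1.
Qed.

End IdealTwoGenerated.

Section CubicPoly.
Variable R : nzRingType.

Lemma size_cubic_tail : (size ('X^2 + 'X - 1 : {poly R})%R <= 3)%N.
Proof.
rewrite -addrA; apply: (leq_trans (size_polyD _ _)); rewrite geq_max size_polyXn /=.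
apply: (leq_trans (size_polyD _ _)).
by rewrite geq_max size_polyX size_polyN size_poly1.
Qed.

Lemma cubic_monic : cubic R \is monic.
Proof.
rewrite -[_ - 1]addrA -addrA monicE lead_coefDl ?lead_coefXn // size_polyXn addrA.
exact: size_cubic_tail.
Qed.

Lemma size_cubic : size (cubic R) = 4%N.
Proof.
rewrite -[_ - 1]addrA -addrA size_polyDl ?size_polyXn // addrA.
exact: size_cubic_tail.
Qed.

End CubicPoly.

Lemma map_cubic (aR rR : nzRingType) (f : {rmorphism aR -> rR}) :
  map_poly f (cubic aR) = cubic rR.
Proof. by rewrite !(rmorphB, rmorphD) /= !map_polyXn map_polyX rmorph1. Qed.

Lemma map_polyXn_sub1 (aR rR : nzRingType) (f : {rmorphism aR -> rR}) n :
  map_poly f ('X^n - 1) = 'X^n - 1.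
Proof. by rewrite rmorphB /= map_polyXn rmorph1. Qed.

(* [inI m P]: [P] vanishes in [Z[lambda] / m Z[lambda]]. *)
Local Notation inI m := (in_ideal2 (cubic int) m%:R).

Lemma inI_coprime_mul (a b : nat) P : coprime a b -> inI a P -> inI b P -> inI (a * b)%N P.
Proof.
move=> cab; have [u [v uv]] := Bezoutz a b.
rewrite /gcdz /= (eqP cab) in uv.
rewrite natrM; apply: (in_ideal2_crt (u := u%:P) (v := v%:P)).
by rewrite -!polyC_natr -!polyCM -polyCD !natz uv.
Qed.

Definition Zl_poly (x : Zl) : {poly int} :=
  (Zl_c0 x)%:P + (Zl_c1 x)%:P * 'X + (Zl_c2 x)%:P * 'X^2.

Lemma size_Zl_poly x : (size (Zl_poly x) <= 3)%N.
Proof.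
rewrite /Zl_poly !mul_polyC; apply: (leq_trans (size_polyD _ _)); rewrite geq_max.
apply/andP; split; last by rewrite (leq_trans (size_scale_leq _ _)) // size_polyXn.
apply: (leq_trans (size_polyD _ _)); rewrite geq_max (leq_trans (size_polyC_leq1 _)) //.
by rewrite (leq_trans (size_scale_leq _ _)) // size_polyX.
Qed.

Lemma Zl_polyM m x y : inI m (Zl_poly (Zl_mul x y) - Zl_poly x * Zl_poly y).
Proof.
case: x => [[a0 a1] a2]; case: y => [[b0 b1] b2].
rewrite /Zl_poly /Zl_mul /Zl_c0 /Zl_c1 /Zl_c2 /=.
set c3 := a1 * b2 + a2 * b1.
exists 0, (- (c3%:P + (a2 * b2)%:P * ('X - 1))).
by rewrite /c3 !(polyCD, polyCM, polyCB, polyCN) polyC1; ring.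
Qed.

Lemma eq0_of_size_mul_cubic (G : {poly int}) : (size (G * cubic int)%R <= 3)%N -> G = 0.
Proof.
apply: contraTeq => nz; rewrite -ltnNge size_Mmonic ?cubic_monic // size_cubic.
by rewrite addnS /= -{1}[3%N]add0n ltn_add2r size_poly_gt0.
Qed.

(* Reducing the [m]-cofactor modulo the monic [f] leaves an [f]-multiple of
   degree < 3, which must vanish. *)
Lemma dvdz_coef_of_inI (m : nat) (P : {poly int}) : (size P <= 3)%N ->
  inI m P -> forall i, (m%:Z %| P`_i)%Z.
Proof.
move=> sP [A [B EP]].
have eA := Pdiv.IdomainMonic.divp_eq (cubic_monic int) A.
suff -> : P = m%:R * (A %% cubic int).
  by move=> i; rewrite -polyC_natr coefCM; apply: dvdz_mulr; rewrite natz.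
have EG : P - m%:R * (A %% cubic int) = (B + m%:R * (A %/ cubic int)) * cubic int.
  by rewrite EP {1}eA; ring.
apply/eqP; rewrite -subr_eq0 EG [B + _]eq0_of_size_mul_cubic ?mul0r // -EG.
apply: (leq_trans (size_polyD _ _)); rewrite geq_max size_polyN sP /=.
rewrite -polyC_natr mul_polyC (leq_trans (size_scale_leq _ _)) //.
by rewrite -ltnS -(size_cubic int) ltn_modp monic_neq0 // cubic_monic.
Qed.

Lemma Zl_cong_poly (m : nat) x y : Zl_cong m x y <-> inI m (Zl_poly x - Zl_poly y).
Proof.
split.
  case: x y => [[a0 a1] a2] [[b0 b1] b2].
  rewrite /Zl_cong /Zl_poly /Zl_c0 /Zl_c1 /Zl_c2 /=.
  move=> [/dvdzP[c0 e0] /dvdzP[c1 e1] /dvdzP[c2 e2]].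
  exists (c0%:P + c1%:P * 'X + c2%:P * 'X^2), 0.
  rewrite -polyC_natr natz mulr0 addr0.
  transitivity ((a0 - b0)%:P + (a1 - b1)%:P * 'X + (a2 - b2)%:P * 'X^2).
    by rewrite !polyCB; ring.
  by rewrite e0 e1 e2 !polyCM; ring.
move=> /dvdz_coef_of_inI h.
have /h : (size (Zl_poly x - Zl_poly y)%R <= 3)%N.
  by apply: (leq_trans (size_polyD _ _)); rewrite geq_max size_polyN !size_Zl_poly.
move=> {}h; move: (h 0%N) (h 1%N) (h 2%N).
rewrite /Zl_poly !(coefB, coefD, coefCM, coefC, coefX, coefXn) /=.
by rewrite !mulr0 !mulr1 !addr0 !add0r; split.
Qed.

Lemma Zl_poly_omega_pow m k : inI m (Zl_poly (Zl_pow omega k) - 'X^(3 * k)).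
Proof.
elim: k => [|k IH].
  rewrite muln0 expr0 /Zl_poly /= /Zl_one /Zl_c0 /Zl_c1 /Zl_c2 /= !mul0r !addr0 subrr.
  exact: in_ideal2_0.
have omegaE : Zl_poly omega - 'X^3 = cubic int * (-1).
  by rewrite /Zl_poly /omega /Zl_c0 /Zl_c1 /Zl_c2 /= polyCN polyC1; ring.
have -> : Zl_poly (Zl_pow omega k.+1) - 'X^(3 * k.+1) =
    (Zl_poly (Zl_mul omega (Zl_pow omega k)) - Zl_poly omega * Zl_poly (Zl_pow omega k))
    + (Zl_poly omega - 'X^3) * Zl_poly (Zl_pow omega k)
    + 'X^3 * (Zl_poly (Zl_pow omega k) - 'X^(3 * k)).
  by rewrite mulnS exprD /Zl_pow iterS; ring.
rewrite omegaE; apply: in_ideal2D; last exact: in_ideal2Ml.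
by apply: in_ideal2D; [apply: Zl_polyM | rewrite -mulrA; apply: in_ideal2r].
Qed.

Lemma Zl_cong_omega_pow (m k : nat) xi :
  Zl_cong m (Zl_mul (Zl_pow omega k) xi) xi <-> inI m (('X^(3 * k) - 1) * Zl_poly xi).
Proof.
rewrite Zl_cong_poly.
have E : Zl_poly (Zl_mul (Zl_pow omega k) xi) - Zl_poly xi =
    (Zl_poly (Zl_mul (Zl_pow omega k) xi) - Zl_poly (Zl_pow omega k) * Zl_poly xi)
    + (Zl_poly (Zl_pow omega k) - 'X^(3 * k)) * Zl_poly xi
    + ('X^(3 * k) - 1) * Zl_poly xi by ring.
have D : inI m (Zl_poly (Zl_mul (Zl_pow omega k) xi) - Zl_poly xi
                 - ('X^(3 * k) - 1) * Zl_poly xi).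
  rewrite E addrK; apply: in_ideal2D; first exact: Zl_polyM.
  by apply: in_ideal2Mr; apply: Zl_poly_omega_pow.
exact: in_ideal2_subr D.
Qed.

Lemma order_dvdn (m N : nat) xi t :
  is_order_mod m xi t -> inI m (('X^(3 * N) - 1) * Zl_poly xi) -> (t %| N)%N.
Proof.
case=> t_gt0 /Zl_cong_omega_pow ht tmin hN; set Y := Zl_poly xi in ht hN.
have htq q : inI m (('X^(3 * (t * q)) - 1) * Y).
  by rewrite mulnA exprM subrX1 mulrAC; apply: in_ideal2Mr.
have hr : inI m (('X^(3 * (N %% t)) - 1) * Y).
  have -> : ('X^(3 * (N %% t)) - 1) * Y = ('X^(3 * N) - 1) * Y
      - 'X^(3 * (N %% t)) * (('X^(3 * (t * (N %/ t))) - 1) * Y).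
    have eN : (3 * N = 3 * (N %% t) + 3 * (t * (N %/ t)))%N.
      by rewrite {1}(divn_eq N t); lia.
    by rewrite eN exprD; ring.
  by apply: in_ideal2B => //; apply: in_ideal2Ml.
apply/eqP; case: (posnP (N %% t)) => // r_gt0.
by have := tmin _ r_gt0 (proj2 (Zl_cong_omega_pow _ _ _) hr); rewrite leqNgt ltn_pmod.
Qed.

Section PolyField.
Variable F : fieldType.
Implicit Types q : {poly F}.

Lemma irredp_noroot q x : irreducible_poly q -> size q != 2%N -> ~~ root q x.
Proof.
move=> iq s2; apply/negP => /factor_theorem [r Er].
have /(apply_irredp iq) : ('X - x%:P) %| q by rewrite Er dvdp_mull.
by rewrite size_XsubC => /(_ isT) /eqp_size; rewrite size_XsubC => h; rewrite -h in s2.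
Qed.

Lemma monic_size2 q : q \is monic -> size q = 2%N -> q = 'X - (- q`_0)%:P.
Proof.
move=> mq sq; apply/polyP => i; rewrite polyCN opprK coefD coefX coefC.
case: i => [|[|i]] /=; first by rewrite add0r.
  by rewrite addr0; move: mq; rewrite monicE lead_coefE sq => /eqP.
by rewrite addr0 nth_default // sq.
Qed.

Lemma irredp_dvdp_of_root (K : fieldExtType F) q g (x : K) :
  irreducible_poly q -> root (map_poly (in_alg K) q) x ->
  root (map_poly (in_alg K) g) x -> q %| g.
Proof.
move=> iq rq rg.
have hg : root (map_poly (in_alg K) (gcdp q g)) x by rewrite gcdp_map root_gcd rq rg.
have s1 : size (gcdp q g) != 1%N.
  apply: contraTneq hg => /eqP/size_poly1P [c c0 ->].
  by rewrite map_polyC rootC fmorph_eq0.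
by rewrite -(eqp_dvdl _ (apply_irredp iq s1 (dvdp_gcdl q g))) dvdp_gcdr.
Qed.


Lemma root_cubic_neq0 x : root (cubic F) x -> x != 0.
Proof.
apply: contraTneq => ->; rewrite /root !hornerE expr0n /= expr0n /= !add0r.
by rewrite oppr_eq0 oner_eq0.
Qed.

(* The discriminant of [f] is [-44]; explicitly,
   [(2X^2 + 7X + 3) f' - (6X + 19) f = 22]. *)
Lemma cubic_separable : (22%:R : F) != 0 -> separable_poly (cubic F).
Proof.
move=> h22; rewrite unlock; apply/Bezout_coprimepP.
set c := (22%:R^-1 : F)%:P.
have c22 : c * 22%:R = 1 by rewrite -polyC_natr -polyCM mulVf.
exists (c * - ('X *+ 6 + 19%:R), c * ('X^2 *+ 2 + 'X *+ 7 + 3%:R)) => /=.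
have -> : (cubic F)^`() = 'X^2 *+ 3 + 'X *+ 2 + 1.
  by rewrite !(derivB, derivD) !derivXn derivX derivC subr0 expr1.
rewrite -[X in _ %= X]c22 [X in X %= _](_ : _ = c * 22%:R) ?eqpxx //; ring.
Qed.

Lemma cubic_roots_prod x y z :
  uniq [:: x; y; z] -> all (root (cubic F)) [:: x; y; z] -> x * y * z = 1.
Proof.
move=> uxyz rxyz.
have /eqP EP : \prod_(r <- [:: x; y; z]) ('X - r%:P) == cubic F.
  have dP : \prod_(r <- [:: x; y; z]) ('X - r%:P) %| cubic F.
    by apply: uniq_roots_dvdp; rewrite ?uniq_rootsE.
  rewrite -eqp_monic ?monic_prod_XsubC ?cubic_monic //.
  by rewrite -dvdp_size_eqp // size_prod_XsubC size_cubic.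
have /(congr1 (horner^~ 0)) := EP.
rewrite !big_cons big_nil !hornerE expr0n /= expr0n /= !add0r.
by move=> h; rewrite -[1]opprK -h; ring.
Qed.

End PolyField.

Lemma cubic_factor_cases (F : finFieldType) :
  [\/ irreducible_poly (cubic F),
      exists a q, [/\ q \is monic, size q = 3%N, irreducible_poly q
                    & cubic F = q * ('X - a%:P)]
    | exists a b c, cubic F = ('X - c%:P) * ('X - b%:P) * ('X - a%:P)].
Proof.
set f := cubic F; have f_size : (1 < size f <= 4)%N by rewrite size_cubic.
have [a ra|nr] := pickP (root f); last first.
  by apply: Or31; apply: cubic_irreducible => // x; rewrite nr.
have [q Ef] := factor_theorem _ _ ra.
have q_monic : q \is monic by rewrite -(monicMr _ (monicXsubC a)) -Ef cubic_monic.
have q_size : size q = 3%N.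
  have /eqP := size_cubic F; rewrite -/f Ef size_Mmonic ?monicXsubC ?monic_neq0 //.
  by rewrite size_XsubC addn2 => /eqP [].
have [b rb|nr] := pickP (root q); last first.
  apply: Or32; exists a, q; split=> //.
  by apply: cubic_irreducible => [|x]; rewrite ?q_size ?nr.
have [r Eq] := factor_theorem _ _ rb.
have r_monic : r \is monic by rewrite -(monicMr _ (monicXsubC b)) -Eq.
have r_size : size r = 2%N.
  move: q_size; rewrite Eq size_Mmonic ?monicXsubC ?monic_neq0 //.
  by rewrite size_XsubC addn2 => -[].
by apply: Or33; exists a, b, (- r`_0); rewrite Ef Eq -(monic_size2 r_monic r_size).
Qed.

Section PrimeField.
Variables (F : finFieldType) (p : nat).
Hypotheses (p_prime : prime p) (card_F : #|F| = p).

Lemma pchar_prime_field : p \in [pchar F].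
Proof. by apply: (card_finPcharP (n := 1%N)); rewrite ?expn1. Qed.

Lemma fermat_field (a : F) : a != 0 -> a ^+ (p - 1) = 1.
Proof.
move=> a0; apply: (mulIf a0); rewrite mul1r -exprSr subn1 prednK ?prime_gt0 //.
by rewrite -card_F expf_card.
Qed.

Lemma card_fieldExt (K : fieldExtType F) : #|FinFieldExtType K| = (p ^ \dim {: K})%N.
Proof.
by have := card_vspace (fullv : {vspace finvect_type K}); rewrite card_vspacef card_F.
Qed.

Lemma irredp_root_ext (q : {poly F}) : irreducible_poly q ->
  exists K : fieldExtType F, exists2 x : K, root (map_poly (in_alg K) q) x &
    x ^+ (p ^ (size q).-1) = x.
Proof.
move=> iq; have [K dK [x rx _]] := irredp_FAdjoin iq.
by exists K, x => //; have := expf_card (x : FinFieldExtType K); rewrite card_fieldExt dK.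
Qed.

(* The roots of an irreducible [q] of degree [d] lie in [F_(p^d)]. *)
Lemma irredp_dvdp_Xsub1 (q : {poly F}) : irreducible_poly q -> q.[0] != 0 ->
  q %| 'X^(p ^ (size q).-1 - 1) - 1.
Proof.
move=> iq q0; have [K [x rx xq]] := irredp_root_ext iq.
apply: (irredp_dvdp_of_root iq rx).
have x0 : x != 0.
  by apply: contraTneq rx => ->; rewrite -(rmorph0 (in_alg K)) fmorph_root rootE.
rewrite map_polyXn_sub1 rootE !hornerE subr_eq0; apply/eqP/(mulIf x0).
by rewrite mul1r -exprSr subn1 prednK ?expn_gt0 ?prime_gt0.
Qed.

Lemma cubic_dvd_split3 a b c : separable_poly (cubic F) ->
  cubic F = ('X - c%:P) * ('X - b%:P) * ('X - a%:P) -> cubic F %| 'X^(p - 1) - 1.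
Proof.
move=> sep_f Ef.
have Ep : cubic F = \prod_(r <- [:: c; b; a]) ('X - r%:P).
  by rewrite Ef !big_cons big_nil mulr1 mulrA.
rewrite Ep; apply: uniq_roots_dvdp; last by rewrite uniq_rootsE -separable_prod_XsubC -Ep.
apply/allP => r r_in; have /root_cubic_neq0 r0 : root (cubic F) r by rewrite Ep root_prod_XsubC.
by rewrite rootE !hornerE fermat_field ?subrr.
Qed.

Lemma cubic_dvd_split a (q : {poly F}) : size q = 3%N -> irreducible_poly q ->
  cubic F = q * ('X - a%:P) -> cubic F %| 'X^(p ^ 2 - 1) - 1.
Proof.
move=> q_size iq Ef.
have a_dvd : ('X - a%:P) %| 'X^(p ^ 2 - 1) - 1.
  have /root_cubic_neq0 a0 : root (cubic F) a by rewrite Ef rootM root_XsubC eqxx orbT.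
  have -> : (p ^ 2 - 1 = (p - 1) * (p + 1))%N by have := prime_gt0 p_prime; nia.
  by rewrite dvdp_XsubCl rootE !hornerE exprM fermat_field // expr1n subrr.
have q_dvd : q %| 'X^(p ^ 2 - 1) - 1.
  have q0 : q.[0] != 0.
    apply/eqP => q0; have := @root_cubic_neq0 F 0.
    by rewrite Ef rootM /root q0 eqxx => /(_ isT).
  by have := irredp_dvdp_Xsub1 iq q0; rewrite q_size.
by rewrite Ef Gauss_dvdp ?a_dvd ?q_dvd // coprimep_XsubC irredp_noroot ?q_size.
Qed.

Section Extension.
Variable K : fieldExtType F.

Lemma cubic_root_frobenius (y : K) : root (cubic K) y -> root (cubic K) (y ^+ p).
Proof.
have chK : p \in [pchar K] by rewrite pchar_lalg pchar_prime_field.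
rewrite !rootE !hornerE => /eqP fy.
have -> : (y ^+ p) ^+ 3 + (y ^+ p) ^+ 2 + y ^+ p - 1 = (y ^+ 3 + y ^+ 2 + y - 1) ^+ p.
  by rewrite -!(pFrobenius_autE chK) !(rmorphB, rmorphD, rmorphXn, rmorph1).
by rewrite fy expr0n gtn_eqF ?prime_gt0.
Qed.

(* A root fixed by Frobenius lies in [F], which an irreducible cubic forbids. *)
Lemma cubic_root_frobenius_neq (y : K) :
  irreducible_poly (cubic F) -> root (cubic K) y -> y ^+ p != y.
Proof.
move=> iF ry; apply/eqP => yp.
have : root (map_poly (in_alg K) ('X^#|F| - 'X)) y.
  by rewrite rmorphB /= map_polyXn map_polyX rootE !hornerE card_F yp subrr.
rewrite finField_genPoly map_prod_XsubC -(big_map (in_alg K) xpredT (fun z => 'X - z%:P)).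
rewrite root_prod_XsubC => /mapP [a _ ya].
by move: ry; rewrite ya -(map_cubic (in_alg K)) fmorph_root (negPf (irredp_noroot a iF _)) ?size_cubic.
Qed.

End Extension.

(* The Frobenius orbit [x, x^p, x^(p^2)] of a root of [f] is the set of all its
   roots, whose product is [1]. *)
Lemma cubic_dvd_inert : irreducible_poly (cubic F) -> cubic F %| 'X^(p ^ 2 + p + 1) - 1.
Proof.
move=> iF; have [K [x rxF xp3]] := irredp_root_ext iF.
rewrite size_cubic /= in xp3; have rx := rxF; rewrite map_cubic in rx.
set y := x ^+ p; set z := y ^+ p.
have ry : root _ y := cubic_root_frobenius rx.
have rz : root _ z := cubic_root_frobenius ry.
have xy : x != y by rewrite eq_sym cubic_root_frobenius_neq.
have yz : y != z by rewrite eq_sym cubic_root_frobenius_neq.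
have xz : x != z.
  apply: contraNneq xy => xz; apply/eqP.
  by rewrite /y {2}xz /z /y -!exprM -[(_ * _)%N]/(p ^ 3)%N xp3.
have xyz : x * y * z = 1 by apply: cubic_roots_prod; rewrite /= ?inE ?negb_or ?xy ?xz ?yz ?rx ?ry ?rz.
apply: (irredp_dvdp_of_root iF rxF).
rewrite map_polyXn_sub1 rootE !hornerE -xyz /z /y -!exprM -mulnn !exprD subr_eq0.
by apply/eqP; ring.
Qed.

End PrimeField.

Section SmallFields.
Variable F : finFieldType.

Lemma cubic_noroot_F3 : #|F| = 3%N -> forall a : F, ~~ root (cubic F) a.
Proof.
(* With [b = a + 1], [f(a) = 0] forces [b^2 = -1] in characteristic 3, which is
   impossible since [b^3 = b]. *)
move=> card_F a; apply/negP; rewrite rootE !hornerE => /eqP fa.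
have c3 : (3%:R : F) = 0 by apply/eqP; rewrite -(dvdn_pcharf (pchar_prime_field _ card_F)).
have ea : a ^+ 3 = a by rewrite -{1}card_F expf_card.
have eb : (a + 1) ^+ 3 = a + 1 by rewrite -{1}card_F expf_card.
have : (1 : F) = 3%:R - (2%:R - (a + 1) ^+ 2) * ((a ^+ 3 + a ^+ 2 + a - 1) + (a - a ^+ 3) + 3%:R)
    - (a + 1) * ((a + 1) ^+ 3 - (a + 1)) by ring.
by rewrite fa ea eb c3 !subrr !(add0r, addr0, mulr0, subr0) oppr0 => /eqP; rewrite oner_eq0.
Qed.

(* Modulo 11, [f = (X - 8)^2 (X - 5)]. *)
Lemma cubic_dvd_F11 : #|F| = 11%N -> cubic F %| 'X^110 - 1.
Proof.
move=> card_F; have ch := pchar_prime_field (p := 11) isT card_F.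
have nz n : (0 < n < 11)%N -> (n%:R : F) != 0.
  move=> /andP [n0 n11]; rewrite -(dvdn_pcharf ch).
  by apply/negP => /(dvdn_leq n0); rewrite leqNgt n11.
have Ef : cubic F = ('X - (8%:R : F)%:P) ^+ 2 * ('X - (5%:R : F)%:P).
  have c11 : (11%:R : {poly F}) = 0 by rewrite -polyC_natr (pcharf0 ch).
  have -> : ('X - (8%:R : F)%:P) ^+ 2 * ('X - (5%:R : F)%:P)
      = cubic F + 11%:R * (- 2%:R * 'X^2 + 13%:R * 'X - 29%:R) by rewrite !polyC_natr; ring.
  by rewrite c11 mul0r addr0.
have root_X10 n : (0 < n < 11)%N -> root ('X^10 - 1) (n%:R : F).
  by move=> /nz n0; rewrite rootE !hornerE (fermat_field (p := 11)) ?subrr.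
have d85 : ('X - (8%:R : F)%:P) * ('X - (5%:R : F)%:P) %| 'X^10 - 1.
  have := @uniq_roots_dvdp F ('X^10 - 1) [:: 8%:R; 5%:R].
  rewrite !big_cons big_nil mulr1; apply.
    by apply/allP => r; rewrite !inE => /orP [] /eqP ->; apply: root_X10.
  by rewrite uniq_rootsE cons_uniq mem_seq1 -subr_eq0 -natrB // nz.
have chP : 11%N \in [pchar {poly F}] by rewrite pchar_poly.
have <- : ('X^10 - 1 : {poly F}) ^+ 11 = 'X^110 - 1.
  by rewrite -(pFrobenius_autE chP) rmorphB rmorph1 /= (pFrobenius_autE chP) -exprM.
apply: dvdp_trans (dvdp_exp2r 11 d85); rewrite Ef exprMn.
by apply: dvdp_mul; [apply: dvdp_exp2l | rewrite -[X in X %| _]expr1 dvdp_exp2l].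
Qed.

End SmallFields.

Section ReductionModPrime.
Variables (p : nat) (p_prime : prime p).
Local Notation intFp := (intr : int -> 'F_p).

Lemma map_poly_Fp_surj (H : {poly 'F_p}) : exists G : {poly int}, map_poly intFp G = H.
Proof.
exists (\poly_(i < size H) (val H`_i)%:Z); apply/polyP => i.
rewrite coef_map_id0 ?mulr0z // coef_poly; case: ltnP => hi; first exact: natr_Zp.
by rewrite nth_default ?mulr0z.
Qed.

Lemma map_poly_Fp_eq0 (P : {poly int}) :
  map_poly intFp P = 0 -> exists A, P = p%:R * A.
Proof.
move=> P0; exists (\poly_(i < size P) (P`_i %/ p%:Z)%Z); apply/polyP => i.
rewrite -polyC_natr coefCM coef_poly; case: ltnP => hi; last by rewrite nth_default ?mulr0.
rewrite natz mulrC divzK // (dvdz_pcharf (pchar_Fp p_prime)).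
by have /eqP := congr1 (coefp i) P0; rewrite /= coef_map_id0 ?mulr0z // coef0.
Qed.

Lemma inI_of_dvdp_Fp (P : {poly int}) : f_mod p %| map_poly intFp P -> inI p P.
Proof.
have -> : f_mod p = map_poly intFp (cubic int) by rewrite map_cubic.
move=> /dvdpP [H EH]; have [G EG] := map_poly_Fp_surj H; rewrite -EG in EH.
have [A EA] : exists A, P - G * cubic int = p%:R * A.
  by apply: map_poly_Fp_eq0; rewrite rmorphB rmorphM /= EH subrr.
by exists A, G; rewrite -EA mulrC subrK.
Qed.

End ReductionModPrime.

Lemma inI_2 : inI 2 ('X^4 - 1).
Proof. by exists ('X - 1), ('X - 1); ring. Qed.

Lemma inI_11 : inI 11 ('X^110 - 1).
Proof.
by apply: inI_of_dvdp_Fp => //; rewrite map_polyXn_sub1; apply: cubic_dvd_F11; rewrite card_Fp.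
Qed.

Lemma f_mod_cases p : prime p -> p <> 2%N -> p <> 11%N ->
  [\/ inert p /\ f_mod p %| 'X^(p ^ 2 + p + 1) - 1,
      [/\ splits p, p <> 3%N & f_mod p %| 'X^(p ^ 2 - 1) - 1]
    | splits_completely p /\ f_mod p %| 'X^(p - 1) - 1].
Proof.
move=> p_prime p2 p11; have card_F := card_Fp p_prime.
have sep_f : separable_poly (f_mod p).
  apply: cubic_separable; rewrite -(dvdn_pcharf (pchar_Fp p_prime)).
  rewrite (_ : 22 = 2 * 11)%N // Euclid_dvdM // !dvdn_prime2 //.
  by apply/norP; split; apply/eqP.
have [iF | [a [q [q_monic q_size iq Ef]]] | [a [b [c Ef]]]] := cubic_factor_cases 'F_p.
- apply: Or31; split; last exact: cubic_dvd_inert.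
  split=> //; exists [:: f_mod p]; split=> //; first by rewrite /= cubic_monic.
    by move=> q; rewrite mem_seq1 => /eqP ->.
  by rewrite big_seq1.
- apply: Or32; split; last exact: cubic_dvd_split Ef.
  + split=> //; exists [:: q; 'X - a%:P]; split=> //; first by rewrite /= q_monic monicXsubC.
      by move=> r; rewrite !inE => /orP [] /eqP -> //; apply: irredp_XsubC.
    by rewrite !big_cons big_nil mulr1.
  + move=> p3; have card_F3 : #|'F_p| = 3%N by rewrite card_F.
    by have /negP := cubic_noroot_F3 card_F3 a; rewrite Ef rootM root_XsubC eqxx orbT.
- apply: Or33; split; last exact: cubic_dvd_split3 Ef.
  split=> //; exists [:: 'X - c%:P; 'X - b%:P; 'X - a%:P]; split=> //.
  + by rewrite /= !monicXsubC.
  + by move=> r; rewrite !inE => /or3P [] /eqP ->; apply: irredp_XsubC.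
  + by rewrite !big_cons big_nil mulr1 mulrA.
Qed.

Lemma inI_Xn_sub1_dvd m k N : inI m ('X^k - 1) -> (k %| N)%N -> inI m ('X^N - 1).
Proof. by move=> hk /dvdnP [j ->]; rewrite mulnC exprM; apply: in_ideal2_subrX1. Qed.

Lemma inI_prime_pow p k e : prime p ->
  inI p ('X^k - 1) -> inI (p ^ e.+1)%N ('X^(k * p ^ e) - 1).
Proof.
move=> p_prime hk; elim: e => [|e IH]; first by rewrite muln1 expn1.
rewrite (expnSr p e) (expnSr p e.+1) mulnA exprM natrM.
apply: in_ideal2_subrX1_lift => //.
by exists (p ^ e)%:R, 0; rewrite mulr0 addr0 -natrM -expnS.
Qed.

Lemma dvdn_mul3_div3 (n : nat) (c : bool) : (c -> 3 %| n)%N ->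
  (n %| 3 * (if c then n %/ 3 else n))%N.
Proof. by case: c => [/(_ isT) n3|_]; [rewrite mulnC divnK | apply: dvdn_mull]. Qed.

Lemma dvdn3_p2p1 (p : nat) : (p %% 3 = 1)%N -> (3 %| p ^ 2 + p + 1)%N.
Proof.
move=> p1; apply/dvdnP; exists (p %/ 3 * (p %/ 3) * 3 + p %/ 3 * 3 + 1)%N.
by have := divn_eq p 3; rewrite p1; nia.
Qed.

Lemma dvdn3_pm1 (p : nat) : (p %% 3 = 1)%N -> (3 %| p - 1)%N.
Proof.
by move=> p1; apply/dvdnP; exists (p %/ 3)%N; have := divn_eq p 3; rewrite p1; lia.
Qed.

Lemma dvdn3_p2m1 p : prime p -> p <> 3%N -> (3 %| p ^ 2 - 1)%N.
Proof.
move=> p_prime p3; have : (p %% 3 != 0)%N.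
  by apply: contra_not_neq p3 => /eqP; rewrite -/(dvdn 3 p) dvdn_prime2 // => /eqP.
have := divn_eq p 3; have := ltn_pmod p (isT : (0 < 3)%N).
case: (p %% 3)%N => [|[|[|]]] //= _ Ep _; apply/dvdnP.
  by exists (p %/ 3 * (p %/ 3) * 3 + p %/ 3 * 2)%N; nia.
by exists (p %/ 3 * (p %/ 3) * 3 + p %/ 3 * 4 + 1)%N; nia.
Qed.

Lemma coprime_pfactor_ind (P : nat -> Prop) : P 1%N ->
  (forall p e, prime p -> P (p ^ e.+1)%N) ->
  (forall a b, (0 < a)%N -> (0 < b)%N -> coprime a b -> P a -> P b -> P (a * b)%N) ->
  forall m, (0 < m)%N -> P m.
Proof.
move=> P1 Ppow Pmul; elim/ltn_ind => m IH m_gt0.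
have [->|m1] := eqVneq m 1%N; first exact: P1.
have p_prime : prime (pdiv m) by rewrite pdiv_prime // ltn_neqAle eq_sym m1.
have [b b_coprime Em] := pfactor_coprime p_prime m_gt0.
set e := logn (pdiv m) m in Em b_coprime.
have e_gt0 : (0 < e)%N by rewrite logn_gt0 mem_primes p_prime m_gt0 pdiv_dvd.
have b_gt0 : (0 < b)%N by move: m_gt0; rewrite Em muln_gt0 => /andP [].
have pe_gt1 : (1 < pdiv m ^ e)%N by rewrite -(exp1n e) ltn_exp2r // prime_gt1.
rewrite Em mulnC; apply: Pmul => //.
- by rewrite expn_gt0 prime_gt0.
- by rewrite coprime_pexpl.
- by rewrite -(prednK e_gt0); apply: Ppow.
by apply: IH => //; rewrite {1}Em ltn_Pmulr.
Qed.

Section TRules.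
Variables (T : nat -> nat) (hT : T_rules T).

Lemma T_prime_pow_exponent p e : prime p ->
  exists2 k, inI p ('X^k - 1) & (k * p ^ e %| 3 * T (p ^ e.+1))%N.
Proof.
have [_ [_ [T2 [T11 [Ti [Ts Tsc]]]]]] := hT; move=> p_prime.
have [->|/eqP p2] := eqVneq p 2%N.
  exists 4%N; first exact: inI_2.
  by rewrite T2 // !expnS; apply/dvdnP; exists 3%N; lia.
have [->|/eqP p11] := eqVneq p 11%N.
  exists 110%N; first exact: inI_11.
  by rewrite T11 // expnS; apply/dvdnP; exists 3%N; lia.
have [[hi dvd_f]|[hs p3 dvd_f]|[hsc dvd_f]] := f_mod_cases p_prime p2 p11.
- exists (p ^ 2 + p + 1)%N; first by apply: inI_of_dvdp_Fp; rewrite ?map_polyXn_sub1.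
  rewrite Ti //= mulnC; apply: dvdn_mul3_div3 => /eqP /dvdn3_p2p1.
  exact: dvdn_mull.
- exists (p ^ 2 - 1)%N; first by apply: inI_of_dvdp_Fp; rewrite ?map_polyXn_sub1.
  rewrite Ts //= mulnC; apply: (@dvdn_mul3_div3 _ true) => _.
  exact/dvdn_mull/dvdn3_p2m1.
- exists (p - 1)%N; first by apply: inI_of_dvdp_Fp; rewrite ?map_polyXn_sub1.
  rewrite Tsc //= mulnC; apply: dvdn_mul3_div3 => /eqP /dvdn3_pm1.
  exact: dvdn_mull.
Qed.

Lemma inI_T m : (0 < m)%N -> inI m ('X^(3 * T m) - 1).
Proof.
have [T1 [Tmul _]] := hT.
move: m; apply: coprime_pfactor_ind => [|p e p_prime|a b a_gt0 b_gt0 ab ha hb].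
- by rewrite T1; apply: in_ideal2_1.
- have [k hk dvd_k] := T_prime_pow_exponent e p_prime.
  exact: inI_Xn_sub1_dvd (inI_prime_pow e p_prime hk) dvd_k.
rewrite Tmul //; apply: inI_coprime_mul => //.
  by apply: inI_Xn_sub1_dvd ha _; rewrite dvdn_pmul2l // dvdn_lcml.
by apply: inI_Xn_sub1_dvd hb _; rewrite dvdn_pmul2l // dvdn_lcmr.
Qed.

End TRules.

Theorem proposition2 (T : nat -> nat) (hT : T_rules T)
    (m : nat) (hm : (0 < m)%N) (xi : Zl) (t : nat)
    (ht : is_order_mod m xi t) :
  (t %| T m)%N.
Proof. exact: order_dvdn ht (in_ideal2Mr _ (inI_T hT hm)). Qed.
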